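(* If $\mathcal{O}$ contains only upwards closed modalities, then $\mathcal{O}$ is decomposable if and only if for all sets $X,Y$, all relations $R\subseteq X\times Y$ and all $t\in TTX$, $r\in TTY$, $t\,\mathcal{O}(\mathcal{O}(R))\,r$ implies $\mu t\,\mathcal{O}(R)\,\mu r$.
   Context: $\Sigma$ is a signature of effect operations with arities $\alpha^n\to\alpha$, $\mathbf{N}\times\alpha^n\to\alpha$, $\alpha^{\mathbf{N}}\to\alpha$ or $\mathbf{N}\times\alpha^{\mathbf{N}}\to\alpha$. $TX$ is the set of possibly infinite labelled trees with leaves $\bot$ or elements of $X$ and internal nodes labelled by operations (or $\sigma_m$, $m\in\mathbb{N}$) with children according to arity; $t\le t'$ iff $t$ is obtained from $t'$ by replacing subtrees with $\bot$. $\mu:TTX\to TX$ replaces each leaf of a tree of trees by that tree. $\mathbf{1}=\{*\}$. A set $\mathcal{O}$ of modalities is given with $[\![o]\!]\subseteq T\mathbf{1}$; upwards closed means $[\![o]\!]$ upward closed under $\le$. $t[\in P]\in T\mathbf{1}$ replaces leaves in $P$ by $*$ and other $X$-leaves by $\bot$; $o(A)=\{t\in TX\mid t[\in A]\in[\![o]\!]\}$. $R[A]=\{y\mid\exists x\in A,\ xRy\}$; $\mathcal{O}$-relator: $t\,\mathcal{O}(R)\,t'$ iff $\forall A\subseteq X\ \forall o\in\mathcal{O}$, $t\in o(A)\Rightarrow t'\in o(R[A])$. $\mathcal{T}$ is the least class of formulas containing $o(\top),o(\bot)$ ($o\in\mathcal{O}$) closed under arbitrary $\bigvee,\bigwedge$,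 with $[\![o(\top)]\!]=o(\{*\})$, $[\![o(\bot)]\!]=o(\emptyset)$, unions/intersections; $t\trianglelefteq t'$ on $T\mathbf{1}$ iff $\forall\Phi\in\mathcal{T}$, $t\in[\![\Phi]\!]\Rightarrow t'\in[\![\Phi]\!]$; $r\preccurlyeq r'$ on $TT\mathbf{1}$ iff $\forall o\,\forall\Phi\in\mathcal{T}$, $r\in o([\![\Phi]\!])\Rightarrow r'\in o([\![\Phi]\!])$. $\mathcal{O}$ is decomposable if $r\preccurlyeq r'$ implies $\mu r\trianglelefteq\mu r'$. *)

From mathcomp Require Import ssreflect ssrfun ssrbool eqtype ssrnat seq.
From Stdlib Require Import ClassicalEpsilon.

Set Implicit Arguments.
Unset Strict Implicit.
Unset Printing Implicit Defensive.

(* A signature: operations, whether they carry a natural-number parameter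
   (arity N x alpha^k -> alpha), and the number of children:
   Some n = finitely many (alpha^n), None = countably many (alpha^N). *)
Record signature := Signature {
  sop : Type;
  sparam : sop -> bool;
  sarity : sop -> option nat
}.

Section Trees.
Variable S : signature.

(* Labels of tree positions: bottom, a return leaf, or an operation node
   (operation, parameter m; m is forced to 0 for unparameterised ops). *)
Inductive lab (A : Type) : Type :=
| Lbot : lab A
| Lret : A -> lab A
| Lop : sop S -> nat -> lab A.

Definition in_ar (o : sop S) (i : nat) : Prop :=
  match sarity o with Some n => (i < n)%N | None => True end.

(* A (possibly infinite) tree is given by its labelling of positions;
   positions are paths from the root, child i of p being rcons p i. *)
Definition raw (A : Type) := seq nat -> option (lab A).

Definition wf_tree (A : Type) (t : raw A) : Prop :=
  t [::] <> None /\
  (forall p i, t (rcons p i) <> None <->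
     exists o m, t p = Some (Lop A o m) /\ in_ar o i) /\
  (forall p o m, t p = Some (Lop A o m) -> sparam o = false -> m = 0%N).

Definition tree (A : Type) := { t : raw A | wf_tree t }.

(* t <= t' : t obtained from t' by replacing subtrees with bottom *)
Definition tle_bot (A : Type) (t t' : raw A) : Prop :=
  forall p l, t p = Some l -> t' p <> None /\ (l = Lbot A \/ t' p = Some l).

Fixpoint muf (A : Type) (r : raw (tree A)) (p q : seq nat) : option (lab A) :=
  match r p with
  | Some (Lret s) => proj1_sig s q
  | Some (Lbot) => if q is [::] then Some (Lbot A) else None
  | Some (Lop o m) =>
      match q with [::] => Some (Lop A o m) | i :: q' => muf r (rcons p i) q' end
  | None => None
  end.

Definition mu (A : Type) (r : raw (tree A)) : raw A := fun q => muf r [::] q.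

Definition restrict (A : Type) (P : A -> Prop) (t : raw A) : raw unit :=
  fun p => match t p with
           | None => None
           | Some (Lbot) => Some (Lbot unit)
           | Some (Lop o m) => Some (Lop unit o m)
           | Some (Lret x) =>
               if excluded_middle_informative (P x) then Some (Lret tt)
               else Some (Lbot unit)
           end.

Variable M : Type.
Variable sem : M -> raw unit -> Prop.

Definition modset (A : Type) (o : M) (P : A -> Prop) (t : raw A) : Prop :=
  sem o (restrict P t).

Definition rimage (X Y : Type) (R : X -> Y -> Prop) (P : X -> Prop) : Y -> Prop :=
  fun y => exists x, P x /\ R x y.

Definition relator (X Y : Type) (R : X -> Y -> Prop) (t : raw X) (t' : raw Y) : Prop :=
  forall (P : X -> Prop) (o : M), modset o P t -> modset o (rimage R P) t'.

Definition upclosed (U : raw unit -> Prop) : Prop :=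
  forall t t' : tree unit, tle_bot (proj1_sig t) (proj1_sig t') ->
    U (proj1_sig t) -> U (proj1_sig t').

Inductive form : Type :=
| Ftop : M -> form
| Fbot : M -> form
| For : forall I : Type, (I -> form) -> form
| Fand : forall I : Type, (I -> form) -> form.

Fixpoint den (F : form) : raw unit -> Prop :=
  match F with
  | Ftop o => modset o (fun _ => True)
  | Fbot o => modset o (fun _ => False)
  | For J f => fun t => exists i, den (f i) t
  | Fand J f => fun t => forall i, den (f i) t
  end.

(* t ⊴ t' on T1 *)
Definition flt (t t' : raw unit) : Prop := forall F, den F t -> den F t'.

(* r ≼ r' on TT1 *)
Definition fprec (r r' : raw (tree unit)) : Prop :=
  forall (o : M) (F : form),
    modset o (fun s : tree unit => den F (proj1_sig s)) r ->
    modset o (fun s : tree unit => den F (proj1_sig s)) r'.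

Definition decomposable : Prop :=
  forall r r' : tree (tree unit),
    fprec (proj1_sig r) (proj1_sig r') ->
    flt (mu (proj1_sig r)) (mu (proj1_sig r')).

End Trees.

(* (=>) Given t O(O(R)) r and A, restrict every inner tree of t to A and every
   inner tree of r to R[A].  Trees related by O(R) have restrictions related by
   ⊴, so the restricted trees of trees are ≼-related; decomposability then
   relates their multiplications, which are the restrictions of μt and μr.
   (<=) Take X = Y = 1 and R the equality: O(=) on T1 is ⊴ on atomic formulas.
   For A ⊆ T1, the disjunction over s ∈ A of the conjunction of the atoms true
   at s is a formula, and ≼ applied to it yields O(O(=)).
   Upward closure makes o(-) monotone, which both directions need. *)
From mathcomp Require Import ssreflect ssrfun ssrbool eqtype ssrnat seq.
From Stdlib Require Import ClassicalEpsilon FunctionalExtensionality.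

Set Implicit Arguments.
Unset Strict Implicit.
Unset Printing Implicit Defensive.

Section Relabelling.
Variable S : signature.

Definition lab_bind (A B : Type) (h : A -> lab S B) (l : lab S A) : lab S B :=
  match l with
  | Lbot => Lbot S B
  | Lret x => h x
  | Lop o m => Lop B o m
  end.

Definition relabel (A B : Type) (h : A -> lab S B) (t : raw S A) : raw S B :=
  fun p => option_map (lab_bind h) (t p).

Section WellFormed.
Variables (A B : Type) (h : A -> lab S B).
Hypothesis h_not_op : forall x o m, h x <> Lop B o m.

Lemma relabel_None t p : relabel h t p = None <-> t p = None.
Proof. by rewrite /relabel; case: (t p). Qed.

Lemma relabel_Lop t p o m : relabel h t p = Some (Lop B o m) <-> t p = Some (Lop A o m).
Proof.
rewrite /relabel; case: (t p) => [[|x|o' m']|] /=; split => //.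
- by case=> /h_not_op.
- by case=> -> ->.
- by case=> -> ->.
Qed.

Lemma wf_relabel (t : raw S A) : wf_tree t -> wf_tree (relabel h t).
Proof.
move=> [root_def [child_def param0]]; split; [|split].
- by move/relabel_None.
- move=> p i.
  have defined : relabel h t (rcons p i) <> None <-> t (rcons p i) <> None.
    by split=> H E; apply: H; apply/relabel_None.
  rewrite defined child_def.
  by split=> -[o [m [tp io]]]; exists o, m; split=> //; apply/relabel_Lop.
- by move=> p o m /relabel_Lop; apply: param0.
Qed.

End WellFormed.
End Relabelling.

Section Restriction.
Variable S : signature.

Definition restrict_lab (A : Type) (P : A -> Prop) (x : A) : lab S unit :=
  if excluded_middle_informative (P x) then Lret S tt else Lbot S unit.

Lemma restrict_relabel A (P : A -> Prop) (t : raw S A) :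
  restrict P t = relabel (restrict_lab P) t.
Proof.
apply: functional_extensionality => p; rewrite /restrict /relabel /restrict_lab.
by case: (t p) => [[|x|o m]|] //=; case: excluded_middle_informative.
Qed.

Lemma wf_restrict A (P : A -> Prop) (t : raw S A) : wf_tree t -> wf_tree (restrict P t).
Proof.
rewrite restrict_relabel; apply: wf_relabel => x o m.
by rewrite /restrict_lab; case: excluded_middle_informative.
Qed.

Definition restrict_tree A (P : A -> Prop) (t : tree S A) : tree S unit :=
  exist _ (restrict P (proj1_sig t)) (wf_restrict P (proj2_sig t)).

Lemma restrict_ext A (P Q : A -> Prop) (t : raw S A) :
  (forall x, P x <-> Q x) -> restrict P t = restrict Q t.
Proof.
move=> PQ; apply: functional_extensionality => p; rewrite /restrict.
case: (t p) => [[|x|o m]|] //.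
case: (excluded_middle_informative (P x)) => Px;
  case: (excluded_middle_informative (Q x)) => Qx //=; exfalso; firstorder.
Qed.

Lemma restrict_True (u : raw S unit) : restrict (fun _ => True) u = u.
Proof.
apply: functional_extensionality => p; rewrite /restrict.
by case: (u p) => [[|[]|o m]|] //; case: excluded_middle_informative.
Qed.

Lemma restrict_restrict A (P : A -> Prop) (Q : unit -> Prop) (t : raw S A) :
  restrict Q (restrict P t) = restrict (fun x => P x /\ Q tt) t.
Proof.
apply: functional_extensionality => p; rewrite /restrict.
case: (t p) => [[|x|o m]|] //.
case: (excluded_middle_informative (P x)) => Px /=;
  case: (excluded_middle_informative (Q tt)) => Qt /=;
  case: excluded_middle_informative => //=; tauto.
Qed.

Lemma tle_restrict A (P Q : A -> Prop) (t : raw S A) :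
  (forall x, P x -> Q x) -> tle_bot (restrict P t) (restrict Q t).
Proof.
move=> PQ p l; rewrite /restrict.
case: (t p) => [[|x|o m]|] //=.
- by case=> <-; split=> //; left.
- case: (excluded_middle_informative (P x)) => Px [<-].
  + by case: excluded_middle_informative => [|/(_ (PQ x Px))//]; split=> //; right.
  + by split; [case: excluded_middle_informative | left].
- by case=> <-; split=> //; right.
Qed.

Definition restrict_inner X (P : X -> Prop) (t : raw S (tree S X)) : raw S (tree S unit) :=
  relabel (fun s => Lret S (restrict_tree P s)) t.

Definition restrict_inner_tree X (P : X -> Prop) (t : tree S (tree S X)) :
  tree S (tree S unit).
Proof. by exists (restrict_inner P (proj1_sig t)); apply: wf_relabel (proj2_sig t). Defined.

Lemma muf_restrict_inner X (P : X -> Prop) (t : raw S (tree S X)) q p :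
  muf (restrict_inner P t) p q = restrict P (muf t p) q.
Proof.
elim: q p => [|i q IH] p /=; rewrite /restrict_inner /relabel /restrict /=;
  case: (t p) => [[|s|o m]|] //=.
Qed.

Lemma mu_restrict_inner X (P : X -> Prop) (t : raw S (tree S X)) :
  mu (restrict_inner P t) = restrict P (mu t).
Proof. by apply: functional_extensionality => q; apply: muf_restrict_inner. Qed.

End Restriction.

Section Modalities.
Variables (S : signature) (M : Type) (sem : M -> raw S unit -> Prop).

Lemma rimage_eq X (P : X -> Prop) x : rimage eq P x <-> P x.
Proof. by split=> [[y [Py <-]] | Px]; last exists x. Qed.

Lemma relator_flt X Y (R : X -> Y -> Prop) (s : raw S X) (s' : raw S Y) (P : X -> Prop) :
  relator sem R s s' -> flt sem (restrict P s) (restrict (rimage R P) s').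
Proof.
move=> sRs'; elim=> [o | o | I f IH [i fi] | I f IH fi] /=.
- by rewrite /modset !restrict_True; apply: sRs'.
- rewrite /modset !restrict_restrict.
  rewrite (restrict_ext _ (Q := fun _ => False)); last by tauto.
  rewrite (restrict_ext _ (Q := rimage R (fun _ => False))); last by firstorder.
  exact: sRs'.
- by exists i; apply: IH.
- by move=> i; apply: IH.
Qed.

Lemma relator_eq_flt (u u' : raw S unit) : relator sem eq u u' -> flt sem u u'.
Proof.
move=> uu' F; have := relator_flt (P := fun _ => True) uu' (F := F).
by rewrite (restrict_ext u' (rimage_eq (fun _ : unit => True))) !restrict_True.
Qed.

Definition atom (o : M) (b : bool) : form M := if b then Ftop o else Fbot o.

Lemma modset_unit_atom o (P : unit -> Prop) :
  exists b, forall u, modset sem o P u <-> den sem (atom o b) u.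
Proof.
case: (excluded_middle_informative (P tt)) => Pt.
- exists true => u /=; rewrite /modset (restrict_ext u (Q := fun _ => True)) //.
  by case.
- exists false => u /=; rewrite /modset (restrict_ext u (Q := fun _ => False)) //.
  by case.
Qed.

Definition char_form (u : raw S unit) : form M :=
  Fand (fun ob : {ob : M * bool | den sem (atom ob.1 ob.2) u} => atom (sval ob).1 (sval ob).2).

Lemma den_char_form u : den sem (char_form u) u.
Proof. by case. Qed.

Lemma char_form_relator_eq u u' : den sem (char_form u) u' -> relator sem eq u u'.
Proof.
move=> u'_char P o; have [b atomP] := modset_unit_atom o P.
have -> : modset sem o (rimage eq P) u' = modset sem o P u'.
  by rewrite /modset (restrict_ext u' (rimage_eq P)).
by rewrite !atomP => ub; apply: (u'_char (exist _ (o, b) ub)).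
Qed.

Lemma modset_restrict_inner X (P : X -> Prop) (Q : tree S unit -> Prop) o t :
  modset sem o Q (restrict_inner P t) = modset sem o (fun s => Q (restrict_tree P s)) t.
Proof.
rewrite /modset; congr (sem o _); apply: functional_extensionality => p.
by rewrite /restrict /restrict_inner /relabel; case: (t p) => [[|s|o' m]|].
Qed.

Hypothesis up : forall o, upclosed (sem o).

Lemma modset_mono A (P Q : A -> Prop) (t : tree S A) o : (forall x, P x -> Q x) ->
  modset sem o P (proj1_sig t) -> modset sem o Q (proj1_sig t).
Proof.
by move=> PQ; apply: (up (t := restrict_tree P t) (t' := restrict_tree Q t)); apply: tle_restrict.
Qed.

Lemma decomposable_relator_mu X Y (R : X -> Y -> Prop)
    (t : tree S (tree S X)) (r : tree S (tree S Y)) :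
  decomposable sem ->
  relator sem (fun a b => relator sem R (proj1_sig a) (proj1_sig b)) (proj1_sig t) (proj1_sig r) ->
  relator sem R (mu (proj1_sig t)) (mu (proj1_sig r)).
Proof.
move=> decomp tRr P o; rewrite /modset -!mu_restrict_inner.
have inner_prec : fprec sem (proj1_sig (restrict_inner_tree P t))
                            (proj1_sig (restrict_inner_tree (rimage R P) r)).
  move=> o' F /=; rewrite !modset_restrict_inner => /tRr; apply: modset_mono.
  by move=> s' [s [Fs sRs']]; apply: (relator_flt sRs').
have := decomp _ _ inner_prec (Ftop o); rewrite /= /modset !restrict_True; apply.
Qed.

Lemma relator_mu_decomposable :
  (forall (t r : tree S (tree S unit)),
    relator sem (fun a b => relator sem eq (proj1_sig a) (proj1_sig b)) (proj1_sig t) (proj1_sig r) ->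
    relator sem eq (mu (proj1_sig t)) (mu (proj1_sig r))) ->
  decomposable sem.
Proof.
move=> mu_rel t r t_prec_r; apply/relator_eq_flt/mu_rel => P o tP.
pose F := For (fun s : {s : tree S unit | P s} => char_form (proj1_sig (proj1_sig s))).
have tF : modset sem o (fun s => den sem F (proj1_sig s)) (proj1_sig t).
  by move: tP; apply: modset_mono => s Ps; exists (exist _ s Ps); apply: den_char_form.
move: (t_prec_r o F tF); apply: modset_mono => s' [[s Ps] /= s'_char].
by exists s; split; last apply: char_form_relator_eq.
Qed.

End Modalities.

Theorem corollary5p10 (S : signature) (M : Type) (sem : M -> raw S unit -> Prop) :
  (forall o : M, upclosed (sem o)) ->
  (decomposable sem <->
   forall (X Y : Type) (R : X -> Y -> Prop) (t : tree S (tree S X)) (r : tree S (tree S Y)),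
     relator sem (fun (a : tree S X) (b : tree S Y) =>
                    relator sem R (proj1_sig a) (proj1_sig b))
             (proj1_sig t) (proj1_sig r) ->
     relator sem R (mu (proj1_sig t)) (mu (proj1_sig r))).
Proof.
move=> up; split=> [decomp X Y R t r | mu_rel].
- exact: decomposable_relator_mu decomp.
- by apply: (relator_mu_decomposable up) => t r; apply: mu_rel.
Qed.
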